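(* Let $p \geq 2$ be an integer and $\mathbf{x},\mathbf{y} \in \operatorname{inc}(\mathbb{R},p)$ with $1 + x_jy_k > 0$ for all $j,k$. Let $C := (1+x_jy_k)_{j,k=1}^p$ and $C^{\circ\alpha} := ((1+x_jy_k)^\alpha)_{j,k=1}^p$. \begin{enumerate} \item If $\alpha > p-2$, then $C^{\circ\alpha}$ is $\mathrm{TP}$ (all minors of all orders are positive). \item If $\alpha \in \{0,1,\dots,p-2\}$, then $C^{\circ\alpha}$ has rank $\alpha+1$. \item If $\alpha \in (0,p-2)\setminus\mathbb{Z}$, then $C^{\circ\alpha}$ is not $\mathrm{TN}$; in fact there is a nonempty index set $J \subset \{1,\dots,p\}$ such that the principal minor $\det((1+x_jy_k)^\alpha)_{j,k\in J}$ is negative. \end{enumerate}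
   Context: For an integer $r \geq 1$, $\operatorname{inc}(\mathbb{R},r)$ denotes the set of $r$-tuples $(x_1,\dots,x_r) \in \mathbb{R}^r$ with $x_1 < \cdots < x_r$. A real matrix is $\mathrm{TN}$ (resp. $\mathrm{TP}$) if all its minors are $\ge0$ (resp. $>0$). *)

From mathcomp Require Import all_boot all_order all_algebra.
From mathcomp Require Import reals exp.
Set Implicit Arguments. Unset Strict Implicit. Unset Printing Implicit Defensive.
Import Order.TTheory GRing.Theory Num.Theory.
Local Open Scope ring_scope.

Definition incr_idx (k n : nat) (f : 'I_k -> 'I_n) : Prop :=
  forall i j : 'I_k, (i < j)%N -> (f i < f j)%N.

Definition incR (R : realType) (p : nat) (x : 'I_p -> R) : Prop :=
  forall i j : 'I_p, (i < j)%N -> x i < x j.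

Definition TP (R : realType) (m n : nat) (A : 'M[R]_(m, n)) : Prop :=
  forall (k : nat) (f : 'I_k -> 'I_m) (g : 'I_k -> 'I_n),
    (0 < k)%N -> incr_idx f -> incr_idx g -> 0 < \det (mxsub f g A).

Definition TN (R : realType) (m n : nat) (A : 'M[R]_(m, n)) : Prop :=
  forall (k : nat) (f : 'I_k -> 'I_m) (g : 'I_k -> 'I_n),
    (0 < k)%N -> incr_idx f -> incr_idx g -> 0 <= \det (mxsub f g A).

Definition powC (R : realType) (p : nat) (x y : 'I_p -> R) (alpha : R) : 'M[R]_p :=
  \matrix_(j, k) powR (1 + x j * y k) alpha.

From mathcomp Require Import all_boot all_order all_algebra.
From mathcomp Require Import all_classical all_reals all_analysis.
From mathcomp Require Import ring lra zify.
Import Order.TTheory GRing.Theory Num.Theory.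
Set Implicit Arguments. Unset Strict Implicit. Unset Printing Implicit Defensive.
Import numFieldNormedType.Exports.
Local Open Scope ring_scope.
Local Open Scope classical_set_scope.

(* Let K_a(x, y) be the n x n matrix ((1 + x_j y_k)^a) (this is powC), with x, y
   increasing and all 1 + x_j y_k > 0.  Every part of the theorem follows from

     sign det K_a(x, y) = sign (prod_{i < n} binom a i)   whenever a is not in {0, .., n-2},

   proved in three steps.
   1. Nonsingularity (det_kernel_neq0).  A power sum t |-> sum_k c_k (1 + t y_k)^a with
      distinct y_k and c <> 0 has no n zeros: dividing by (1 + t y_k0)^a and applying
      Rolle between consecutive zeros gives n-1 zeros of a power sum with n-1 terms and
      exponent a - 1, and we conclude by induction.
   2. Behaviour near 0 (det_scaled_kernel_near0).  Taylor's formula for (1 + u)^a gives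
      K_a(t x, y) = V(x) diag(t^i) (diag(binom a i) + o(1)) V(y)^T as t -> 0+, with V the
      Vandermonde matrices, so det K_a(t x, y) has the sign of prod_i binom a i for small t.
   3. Deformation (det_kernel_sign).  t |-> det K_a(t x, y) is continuous and, by 1, has no
      zero on (0, 1], so by the intermediate value theorem its sign at t = 1 is that near 0.
   The theorem then applies this to all square submatrices (all binomials positive when
   a > p - 2), to the leading block of size floor(a) + 3 (exactly one negative binomial),
   and, for integral a, combines 1 with the rank bound coming from the binomial theorem. *)

Section IncreasingIndices.
Variable R : realType.

Lemma strict_incr_inj k (T : Type) (lt : rel T) (f : 'I_k -> T) : irreflexive lt ->
  (forall i j : 'I_k, (i < j)%N -> lt (f i) (f j)) -> injective f.
Proof.
move=> irr finc i j e; apply/val_inj/eqP.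
by case: ltngtP => // /finc; rewrite e irr.
Qed.

Lemma incR_le n (z : 'I_n -> R) (i j : 'I_n) : incR z -> (i <= j)%N -> z i <= z j.
Proof.
by move=> zinc; rewrite leq_eqVlt => /orP[/eqP/val_inj -> // | /zinc/ltW].
Qed.

Lemma incr_idx_le k p (f : 'I_k -> 'I_p) : incr_idx f -> (k <= p)%N.
Proof.
move=> /(@strict_incr_inj _ _ (fun i j : 'I_p => (i < j)%N) _ (fun i => ltnn i)).
by move/leq_card; rewrite !card_ord.
Qed.

Lemma incR_comp p k (x : 'I_p -> R) (f : 'I_k -> 'I_p) :
  incR x -> incr_idx f -> incR (fun j => x (f j)).
Proof. by move=> hx hf i j ij; apply/hx/hf. Qed.

End IncreasingIndices.

Section PowerSums.
Variable R : realType.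

Lemma affine_derive (c t : R) : is_derive t 1 (fun s : R => 1 + s * c) c.
Proof.
have := is_deriveD (@is_derive_cst R R R 1 t 1)
  (@is_deriveM R R id (cst c) t 1 1 0 (is_derive_id _ _) (is_derive_cst _ _ _)).
by move=> D; apply: is_derive_eq D _; rewrite /= scaler0 !add0r /GRing.scale /= mulr1.
Qed.

Lemma shifted_powR_derive (a c t : R) : 0 < 1 + t * c ->
  is_derive t 1 (fun s => powR (1 + s * c) a) (a * powR (1 + t * c) (a - 1) * c).
Proof.
move=> pos.
have := @is_derive1_comp R (fun u : R => powR u a) (fun s : R => 1 + s * c) t _ _
  (is_derive1_powR a pos) (affine_derive c t).
by rewrite /comp.
Qed.

Lemma powR_pred (u b : R) : 0 < u -> powR u b = powR u (b - 1) * u.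
Proof.
move=> u0; rewrite -{3}(@powRr1 _ u) ?ltW // -powRD ?subrK //.
by apply/implyP => _; rewrite gt_eqF.
Qed.

Lemma affine_pos_between (u v t c : R) : u <= t -> t <= v ->
  0 < 1 + u * c -> 0 < 1 + v * c -> 0 < 1 + t * c.
Proof.
move=> ut tv hu hv; have [c0|c0] := leP 0 c.
  by apply: (lt_le_trans hu); rewrite lerD2l ler_wpM2r.
by apply: (lt_le_trans hv); rewrite lerD2l ler_wnM2r // ltW.
Qed.

(* The power sum t |-> sum_k c_k (1 + t y_k)^a; a row combination of K_a(z, y)
   evaluates it at the points z_j. *)
Definition powsum n (c y : 'I_n -> R) (a t : R) : R :=
  \sum_(k < n) c k * powR (1 + t * y k) a.

Lemma powsum_derive n (c y : 'I_n -> R) (a t : R) : (forall k, 0 < 1 + t * y k) ->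
  is_derive t 1 (powsum c y a)
    (\sum_(k < n) c k * (a * powR (1 + t * y k) (a - 1) * y k)).
Proof.
move=> pos.
have -> : powsum c y a = \sum_(k < n) (fun s => c k * powR (1 + s * y k) a).
  by rewrite fct_sumE; apply/funext => s.
apply: is_derive_sum => k.
exact: is_derive_eq (is_deriveZ (c k) (shifted_powR_derive a (pos k))) _.
Qed.

Lemma powsum_quotient_derive n (c y : 'I_n -> R) (a y0 t : R) :
  (forall k, 0 < 1 + t * y k) -> 0 < 1 + t * y0 ->
  is_derive t 1 (fun s => powsum c y a s * powR (1 + s * y0) (- a))
    (a * powR (1 + t * y0) (- a - 1) * powsum (fun k => c k * (y k - y0)) y (a - 1) t).
Proof.
move=> pos pos0.
have D := is_deriveM (powsum_derive c a pos) (shifted_powR_derive (- a) pos0).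
apply: is_derive_eq D _.
rewrite /powsum /GRing.scale /= (powR_pred (- a) pos0).
under eq_bigr => k _ do rewrite (powR_pred a (pos k)).
rewrite mulr_suml mulr_sumr mulr_sumr -big_split /=; apply: eq_bigr => k _.
ring.
Qed.

(* Rolle's theorem for the quotient above: between two zeros of a power sum lies a zero of
   the reduced power sum, whose coefficient at k0 vanishes. *)
Lemma powsum_rolle n (c y : 'I_n -> R) (k0 : 'I_n) (a u v : R) : a != 0 -> u < v ->
  (forall k, 0 < 1 + u * y k) -> (forall k, 0 < 1 + v * y k) ->
  powsum c y a u = 0 -> powsum c y a v = 0 ->
  exists2 xi, u < xi < v & powsum (fun k => c k * (y k - y k0)) y (a - 1) xi = 0.
Proof.
move=> a0 uv hu hv zu zv.
have pos t k : u <= t -> t <= v -> 0 < 1 + t * y k.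
  by move=> ut tv; exact: affine_pos_between ut tv (hu k) (hv k).
pose g s := powsum c y a s * powR (1 + s * y k0) (- a).
have D t : u <= t -> t <= v -> is_derive t 1 g
    (a * powR (1 + t * y k0) (- a - 1) *
     powsum (fun k => c k * (y k - y k0)) y (a - 1) t).
  by move=> ut tv; apply: powsum_quotient_derive => [k|]; apply: pos.
have [xi] : exists2 xi, xi \in `]u, v[%R & is_derive xi 1 g 0.
  apply: Rolle uv _ _ _.
  - by move=> t; rewrite in_itv /= => /andP[ut tv]; have [] := D t (ltW ut) (ltW tv).
  - apply: derivable_within_continuous => t; rewrite in_itv /= => /andP[ut tv].
    by have [] := D t ut tv.
  - by rewrite /g zu zv !mul0r.
rewrite in_itv /= => /andP[uxi xiv] Dxi.
have := @derive_val _ _ _ _ _ _ _ Dxi.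
rewrite (@derive_val _ _ _ _ _ _ _ (D xi (ltW uxi) (ltW xiv))) => /eqP.
rewrite !mulf_eq0 (negbTE a0) gt_eqF ?powR_gt0 ?pos ?ltW //= => /eqP z.
by exists xi; rewrite ?uxi.
Qed.

Lemma powsum_drop n (c y : 'I_n.+1 -> R) (k0 : 'I_n.+1) (a t : R) : c k0 = 0 ->
  powsum c y a t = powsum (fun k => c (lift k0 k)) (fun k => y (lift k0 k)) a t.
Proof. by move=> ck0; rewrite /powsum (bigD1_ord k0) //= ck0 mul0r add0r. Qed.

Lemma powsum_single n (c y : 'I_n.+1 -> R) (k0 : 'I_n.+1) (a t : R) :
  (forall k, c (lift k0 k) = 0) -> powsum c y a t = c k0 * powR (1 + t * y k0) a.
Proof.
by move=> c0; rewrite /powsum (bigD1_ord k0) //= big1 ?addr0 // => k _; rewrite c0 mul0r.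
Qed.

Lemma powsum_zero_count n : forall a : R, (forall l : nat, (l.+1 < n)%N -> a != l%:R) ->
  forall c y z : 'I_n -> R, injective y -> (exists k, c k != 0) -> incR z ->
  (forall j k, 0 < 1 + z j * y k) -> exists j, powsum c y a (z j) != 0.
Proof.
elim: n => [|n IH] a Ha c y z yinj [k0 ck0] zinc zpos; first by case: k0 ck0.
apply: contrapT => /forallNP zero.
have {}zero j : powsum c y a (z j) = 0 by apply/eqP/negPn/negP/zero.
pose c' (k : 'I_n) := c (lift k0 k) * (y (lift k0 k) - y k0).
have [[k1 ck1] | /forallNP c'0] := pselect (exists k, c' k != 0); last first.
  have c0 k : c (lift k0 k) = 0.
    have /negP/negPn := c'0 k.
    rewrite mulf_eq0 subr_eq0 (inj_eq yinj) [lift _ _ == _]eq_sym.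
    by rewrite (negbTE (neq_lift _ _)) orbF => /eqP.
  have /eqP := zero ord0; rewrite (powsum_single _ _ _ c0) mulf_eq0 (negbTE ck0) /=.
  by rewrite gt_eqF ?powR_gt0.
have a0 : a != 0 by apply: (Ha 0%N); have := ltn_ord k1; lia.
have rolle j : exists xi, z (widen_ord (leqnSn n) j) < xi < z (lift ord0 j) /\
    powsum (fun k => c k * (y k - y k0)) y (a - 1) xi = 0.
  have zlt : z (widen_ord (leqnSn n) j) < z (lift ord0 j) by apply: zinc; rewrite /= /bump.
  by have [xi ? ?] := powsum_rolle k0 a0 zlt (zpos _) (zpos _) (zero _) (zero _); exists xi.
have [xi hxi] := choice rolle.
have [j] : exists j, powsum c' (fun k => y (lift k0 k)) (a - 1) (xi j) != 0.
  apply: IH => [l hl | i j /yinj /lift_inj // | | i j ij | j k].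
  - by rewrite subr_eq natr1; apply: Ha.
  - by exists k1.
  - case: (hxi i) => /andP[_ xi_i] _; case: (hxi j) => /andP[xi_j _] _.
    by apply: lt_trans xi_i (le_lt_trans (incR_le zinc _) xi_j); rewrite /= /bump.
  - case: (hxi j) => /andP[lo hi] _.
    exact: affine_pos_between (ltW lo) (ltW hi) (zpos _ _) (zpos _ _).
by case: (hxi j) => _; rewrite (@powsum_drop _ _ _ k0) ?subrr ?mulr0 // => ->; rewrite eqxx.
Qed.

End PowerSums.

Section GeneralizedBinomials.
Variable R : realType.

(* binom a i = a (a - 1) ... (a - i + 1) / i!, the Taylor coefficients of (1 + u)^a. *)
Definition binom (a : R) (i : nat) : R := (\prod_(l < i) (a - l%:R)) / (i`!)%:R.

Lemma binom0 (a : R) : binom a 0 = 1.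
Proof. by rewrite /binom big_ord0 fact0 divr1. Qed.

Lemma binomS (a : R) i : binom a i.+1 * i.+1%:R = a * binom (a - 1) i.
Proof.
rewrite /binom big_ord_recl /= subr0 factS natrM.
have -> : \prod_(l < i) (a - (bump 0 l)%:R) = \prod_(l < i) (a - 1 - l%:R).
  by apply: eq_bigr => l _; rewrite /bump /= add1n -natr1 opprD addrA addrAC.
have i1 : (i.+1)%:R != 0 :> R by rewrite pnatr_eq0.
have fi : (i`!)%:R != 0 :> R by rewrite pnatr_eq0 -lt0n fact_gt0.
by rewrite invfM; field; apply/andP.
Qed.

Lemma binom_gt0 (a : R) i : (forall l, (l < i)%N -> l%:R < a) -> 0 < binom a i.
Proof.
move=> h; rewrite /binom divr_gt0 ?ltr0n ?fact_gt0 //.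
by apply: prodr_gt0 => l _; rewrite subr_gt0; apply: h.
Qed.

Lemma binom_neq0 (a : R) i : (forall l, (l < i)%N -> a != l%:R) -> binom a i != 0.
Proof.
move=> h; rewrite /binom mulf_neq0 ?invr_eq0 ?pnatr_eq0 -?lt0n ?fact_gt0 //.
by rewrite prodf_seq_neq0; apply/allP => l _; rewrite subr_eq0 h.
Qed.

(* The product of the first n Taylor coefficients; its sign is the sign of det K_a. *)
Definition binom_prod n (a : R) : R := \prod_(i < n) binom a i.

Lemma binom_prod_neq0 n (a : R) :
  (forall l : nat, (l.+1 < n)%N -> a != l%:R) -> binom_prod n a != 0.
Proof.
move=> ha; rewrite prodf_seq_neq0; apply/allP => i _; apply: binom_neq0 => l li.
by apply: ha; have := ltn_ord i; lia.
Qed.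

Lemma binom_prod_gt0 (a : R) k : (forall l, (l.+2 <= k)%N -> l%:R < a) -> 0 < binom_prod k a.
Proof.
move=> ha; apply: prodr_gt0 => i _; apply: binom_gt0 => l li; apply: ha.
by apply: leq_trans (ltn_ord i); rewrite ltnS.
Qed.

(* For m < a < m + 1 exactly one of the first m + 3 coefficients, binom a (m + 2), is
   negative. *)
Lemma binom_prod_floor_lt0 (a : R) (m : nat) :
  m%:R < a -> a < m.+1%:R -> binom_prod m.+3 a < 0.
Proof.
move=> ma am.
have below l : (l <= m)%N -> l%:R < a by move=> lm; apply: le_lt_trans ma; rewrite ler_nat.
have last_neg : binom a m.+2 < 0.
  rewrite /binom big_ord_recr /= pmulr_llt0 ?invr_gt0 ?ltr0n ?fact_gt0 //.
  rewrite pmulr_rlt0 ?subr_lt0 //; apply: prodr_gt0 => l _.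
  by rewrite subr_gt0 below // -ltnS.
rewrite /binom_prod big_ord_recr /= pmulr_rlt0 //.
apply: prodr_gt0 => i _; apply: binom_gt0 => l li; apply: below.
by have := ltn_ord i; lia.
Qed.

End GeneralizedBinomials.

Section Taylor.
Variable R : realType.

Lemma pow1p_bounded (a : R) : exists C : R, 0 <= C /\
  forall u : R, `|u| <= 1/2 -> `|powR (1 + u) a| <= C.
Proof.
exists (powR (1/2) a + powR (3/2) a); split; first by rewrite addr_ge0 ?powR_ge0.
move=> u hu; rewrite ger0_norm ?powR_ge0 //.
have [lo hi] : 1/2 <= 1 + u /\ 1 + u <= 3/2.
  by move: hu; rewrite ler_norml => /andP[h1 h2]; split; lra.
have [a0|a0] := leP 0 a.
  apply: le_trans (_ : powR (3/2) a <= _); last by rewrite lerDr powR_ge0.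
  by apply: ge0_ler_powR => //; rewrite nnegrE; lra.
apply: le_trans (_ : powR (1/2) a <= _); last by rewrite lerDl powR_ge0.
have inv s : powR s a = (powR s (- a))^-1 by rewrite -powRN opprK.
rewrite !inv lef_pV2 ?posrE ?powR_gt0 //; try lra.
by apply: ge0_ler_powR; rewrite ?nnegrE; lra.
Qed.

Lemma poly_derive n (b : nat -> R) (t : R) :
  is_derive t 1 (fun u => \sum_(i < n) b i * u ^+ i) (\sum_(i < n) b i * (i%:R * t ^+ i.-1)).
Proof.
have -> : (fun u => \sum_(i < n) b i * u ^+ i) = \sum_(i < n) (fun u => b i * u ^+ i).
  by rewrite fct_sumE; apply/funext => u.
apply: is_derive_sum => i.
have -> : (fun u => b i * u ^+ i) = b i \*: (id ^+ i : R -> R).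
  by apply/funext => u /=; rewrite exprfctE.
have D := is_deriveZ (b i) (@is_deriveX R R id i t 1 1 (is_derive_id _ _)).
by apply: is_derive_eq D _; rewrite /GRing.scale /= mulr1.
Qed.

Lemma taylor_poly_derive n (a t : R) :
  \sum_(i < n.+1) binom a i * (i%:R * t ^+ i.-1) = a * \sum_(i < n) binom (a - 1) i * t ^+ i.
Proof.
rewrite big_ord_recl /= mul0r mulr0 add0r mulr_sumr; apply: eq_bigr => i _.
by rewrite /bump /= add1n mulrA binomS mulrA.
Qed.

Lemma mvt_from0 (phi dphi : R -> R) (r u : R) : `|u| <= r ->
  (forall t : R, `|t| <= r -> is_derive t 1 phi (dphi t)) ->
  exists2 xi : R, `|xi| <= `|u| & phi u - phi 0 = dphi xi * u.
Proof.
move=> ur D.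
have mvt (s t : R) : s <= t -> `|s| <= r -> `|t| <= r ->
    exists2 xi, s <= xi <= t & phi t - phi s = dphi xi * (t - s).
  move=> st sr tr.
  have inr v : s <= v -> v <= t -> `|v| <= r.
    by move: sr tr; rewrite !ler_norml => /andP[? ?] /andP[? ?] ? ?; apply/andP; split; lra.
  have [xi xiI e] : exists2 xi, xi \in `[s, t]%R & phi t - phi s = dphi xi * (t - s).
    apply: MVT_segment st _ _.
    - by move=> v; rewrite in_itv /= => /andP[sv vt]; apply/D/inr; exact: ltW.
    - apply: derivable_within_continuous => v; rewrite in_itv /= => /andP[sv vt].
      by have [] := D v (inr v sv vt).
  by move: xiI; rewrite in_itv /= => xiI; exists xi.
have r0 : `|0 : R| <= r by rewrite normr0 (le_trans _ ur).
have [u0|u0] := leP 0 u.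
  have [xi /andP[h1 h2] e] := mvt 0 u u0 r0 ur.
  exists xi; last by rewrite e subr0.
  by rewrite !ger0_norm.
have [xi /andP[h1 h2] e] := mvt u 0 (ltW u0) ur r0.
exists xi; first by rewrite !ler0_norm ?lerN2 // ltW.
by rewrite -opprB e sub0r mulrN opprK.
Qed.

(* Taylor's formula for (1 + u)^a with a remainder O(|u|^n) on |u| <= 1/2, by induction
   on n through the mean value theorem. *)
Lemma pow1p_taylor n : forall a : R, exists C : R, 0 <= C /\ forall u : R, `|u| <= 1/2 ->
  `|powR (1 + u) a - \sum_(i < n) binom a i * u ^+ i| <= C * `|u| ^+ n.
Proof.
elim: n => [|n IH] a.
  have [C [C0 HC]] := pow1p_bounded a.
  by exists C; split => // u hu; rewrite big_ord0 subr0 expr0 mulr1; apply: HC.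
have [C [C0 HC]] := IH (a - 1).
exists (`|a| * C); split => [|u hu]; first by rewrite mulr_ge0.
pose phi t := powR (1 + t) a - \sum_(i < n.+1) binom a i * t ^+ i.
have D (t : R) : `|t| <= 1/2 -> is_derive t 1 phi
    (a * (powR (1 + t) (a - 1) - \sum_(i < n) binom (a - 1) i * t ^+ i)).
  move=> ht; have t1 : 0 < 1 + t * 1 by move: ht; rewrite mulr1 ler_norml => /andP[? ?]; lra.
  have P : is_derive t 1 (fun s : R => powR (1 + s) a) (a * powR (1 + t) (a - 1)).
    have -> : (fun s : R => powR (1 + s) a) = (fun s => powR (1 + s * 1) a).
      by apply/funext => s; rewrite mulr1.
    by apply: is_derive_eq (shifted_powR_derive a t1) _; rewrite !mulr1.
  apply: is_derive_eq (is_deriveB P (poly_derive n.+1 (binom a) t)) _.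
  by rewrite taylor_poly_derive mulrBr.
have phi0 : phi 0 = 0.
  rewrite /phi addr0 powR1 big_ord_recl /= expr0 mulr1 binom0 big1 ?addr0 ?subrr // => i _.
  by rewrite expr0n mulr0.
have [xi xiu e] := mvt_from0 hu D.
have Hr : `|powR (1 + xi) (a - 1) - \sum_(i < n) binom (a - 1) i * xi ^+ i| <= C * `|u| ^+ n.
  apply: le_trans (HC xi (le_trans xiu hu)) _.
  by rewrite ler_wpM2l // lerXn2r // nnegrE.
rewrite -/(phi u) -[phi u]subr0 -phi0 e !normrM.
apply: le_trans (ler_wpM2r (normr_ge0 u) (ler_wpM2l (normr_ge0 a) Hr)) _.
by rewrite exprS [`|u| * _]mulrC !mulrA.
Qed.

Lemma pow_ratio n (i : 'I_n) (t : R) : 0 < t -> t < 1 -> (t ^+ i)^-1 * t ^+ n <= t.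
Proof.
move=> t0 t1; have -> : t ^+ n = t ^+ i * t ^+ (n - i).-1.+1.
  by rewrite prednK ?subn_gt0 // -exprD subnKC // ltnW.
rewrite mulKf ?expf_neq0 ?gt_eqF // exprS -[leRHS]mulr1.
by rewrite ler_wpM2l ?(ltW t0) // exprn_ile1 ?(ltW t0) ?(ltW t1).
Qed.

Lemma remainder_bound n (i : 'I_n) (a w : R) : exists K d : R, 0 < d /\
  forall t, 0 < t -> t < d ->
   `|(t ^+ i)^-1 * (powR (1 + t * w) a - \sum_(l < n) binom a l * (t * w) ^+ l)| <= K * t.
Proof.
have [C [C0 HC]] := pow1p_taylor n a.
exists (C * `|w| ^+ n), (Num.min 1 (1 / (2 * (`|w| + 1)))); split.
  by rewrite lt_min ltr01 /= divr_gt0 // mulr_gt0 // ltr_wpDl.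
move=> t t0; rewrite lt_min => /andP[t1 t2].
have w1 : 0 < `|w| + 1 by rewrite ltr_wpDl.
have tw : `|t * w| <= 1 / 2.
  rewrite normrM ger0_norm ?(ltW t0) //.
  move: t2; rewrite ltr_pdivlMr ?mulr_gt0 // => t2.
  have : t * `|w| <= t * (`|w| + 1) by apply: ler_wpM2l; rewrite ?lerDl ?ltW.
  lra.
rewrite normrM normfV normrX ger0_norm ?(ltW t0) //.
apply: (le_trans (ler_wpM2l _ (HC _ tw))); first by rewrite invr_ge0 exprn_ge0 // ltW.
rewrite normrM exprMn ger0_norm ?(ltW t0) //.
have h1 := pow_ratio i t0 t1.
have h2 : 0 <= C * `|w| ^+ n by rewrite mulr_ge0 ?exprn_ge0.
set X := (t ^+ i)^-1 in h1 *; set T := t ^+ n in h1 *; set W := `|w| ^+ n in h2 *.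
nra.
Qed.

End Taylor.

Section Limits.
Variable R : realType.

Lemma det_cvg {T : Type} (F : set_system T) {FF : Filter F} n
    (A : T -> 'M[R]_n) (L : 'M[R]_n) :
  (forall i j, A t i j @[t --> F] --> L i j) -> \det (A t) @[t --> F] --> \det L.
Proof.
move=> AL; apply: cvg_big => [|s _]; first exact: add_continuous.
apply: cvgM; first exact: cvg_cst.
by apply: cvg_big => [|i _]; [exact: mul_continuous | exact: AL].
Qed.

Lemma mulmx3_cvg {T : Type} (F : set_system T) {FF : Filter F} n (C D : 'M[R]_n)
    (G : T -> 'M[R]_n) (L : 'M[R]_n) :
  (forall i j, G t i j @[t --> F] --> L i j) ->
  forall i k, (C *m G t *m D) i k @[t --> F] --> (C *m L *m D) i k.
Proof.
move=> GL i k.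
have e (M : 'M[R]_n) : (C *m M *m D) i k = \sum_b (\sum_a C i a * M a b) * D b k.
  by rewrite !mxE; apply: eq_bigr => b _; rewrite !mxE.
under eq_cvg do rewrite e.
rewrite e; apply: cvg_big => [|b _]; first exact: add_continuous.
apply: cvgM; last exact: cvg_cst.
apply: cvg_big => [|a _]; first exact: add_continuous.
by apply: cvgM; [exact: cvg_cst | exact: GL].
Qed.

Lemma cvg0_linear_bound (f : R -> R) (K d : R) : 0 < d ->
  (forall t, 0 < t -> t < d -> `|f t| <= K * t) -> f t @[t --> 0^'+] --> 0.
Proof.
move=> d0 fK; apply/cvgr0Pnorm_lt => e e0.
have K1 : 0 < `|K| + 1 by rewrite ltr_wpDl.
near=> t.
have t0 : 0 < t by near: t; exact: nbhs_right_gt.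
have td : t < d by near: t; exact: nbhs_right_lt.
have te : t < e / (`|K| + 1) by near: t; apply: nbhs_right_lt; rewrite divr_gt0.
apply: (le_lt_trans (fK t t0 td)).
apply: (le_lt_trans (y := (`|K| + 1) * t)).
  by rewrite ler_wpM2r ?(ltW t0) // (le_trans (ler_norm K)) // lerDl.
by rewrite mulrC -ltr_pdivlMr.
Unshelve. all: end_near.
Qed.

End Limits.

Section VandermondeFactor.
Variable R : realType.

(* V(x) = (x_j^i); with diagf d = diag(d_i) the truncated Taylor expansion of K_a(t x, y)
   is V(x) diag(t^i) diag(binom a i) V(y)^T. *)
Definition vander n (x : 'I_n -> R) : 'M[R]_n := \matrix_(j, i) x j ^+ i.

Definition diagf n (d : 'I_n -> R) : 'M[R]_n := diag_mx (\row_i d i).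

Lemma det_vander_gt0 n (x : 'I_n -> R) : incR x -> 0 < \det (vander x).
Proof.
move=> hx; have -> : vander x = (Vandermonde n (\row_j x j))^T.
  by apply/matrixP => j i; rewrite !mxE.
rewrite det_tr det_Vandermonde; apply: prodr_gt0 => i _; apply: prodr_gt0 => j ij.
by rewrite !mxE subr_gt0; apply: hx.
Qed.

Lemma vander_unit n (x : 'I_n -> R) : incR x -> vander x \in unitmx.
Proof. by move=> hx; rewrite unitmxE unitfE gt_eqF // det_vander_gt0. Qed.

Lemma det_diagf n (d : 'I_n -> R) : \det (diagf d) = \prod_i d i.
Proof. by rewrite det_diag; apply: eq_bigr => i _; rewrite mxE. Qed.

Lemma diagf_powK n (t : R) (G : 'M[R]_n) : t != 0 ->
  diagf (fun i : 'I_n => t ^+ i) *m (diagf (fun i : 'I_n => (t ^+ i)^-1) *m G) = G.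
Proof.
move=> t0; apply/matrixP => i j; rewrite /diagf !mul_diag_mx !mxE mulrA mulfV ?mul1r //.
by rewrite expf_neq0.
Qed.

Lemma taylor_mx_entry n (x y : 'I_n -> R) (a t : R) j k :
  (vander x *m diagf (fun i : 'I_n => t ^+ i) *m diagf (fun i : 'I_n => binom a i)
     *m (vander y)^T) j k = \sum_(i < n) binom a i * (t * x j * y k) ^+ i.
Proof.
rewrite /diagf !mul_mx_diag !mxE; apply: eq_bigr => i _; rewrite !mxE.
by rewrite !exprMn; ring.
Qed.

End VandermondeFactor.

Section ScaledKernel.
Variable R : realType.
Variables (n : nat) (x y : 'I_n -> R) (a : R).
Hypotheses (hx : incR x) (hy : incR y).

Definition taylor_mx (t : R) : 'M[R]_n :=
  vander x *m diagf (fun i : 'I_n => t ^+ i) *m diagf (fun i : 'I_n => binom a i)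
    *m (vander y)^T.

Definition scaled_remainder (t : R) : 'M[R]_n :=
  diagf (fun i : 'I_n => (t ^+ i)^-1) *m
    (invmx (vander x) *m (powC (fun j => t * x j) y a - taylor_mx t) *m invmx (vander y)^T).

Lemma scaled_kernel_factor t : t != 0 ->
  powC (fun j => t * x j) y a = vander x *m diagf (fun i : 'I_n => t ^+ i) *m
    (diagf (fun i : 'I_n => binom a i) + scaled_remainder t) *m (vander y)^T.
Proof.
move=> t0; rewrite mulmxDr mulmxDl /scaled_remainder -[_ *m (_ *m _)]mulmxA diagf_powK //.
rewrite !mulmxA mulmxV ?vander_unit // mul1mx -mulmxA.
rewrite -[_ *m invmx _ *m _]mulmxA mulVmx ?unitmx_tr ?vander_unit // mulmx1.
by rewrite !mulmxA addrC subrK.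
Qed.

(* E(t) -> 0 as t -> 0+, since each entry of the remainder divided by t^i is O(t). *)
Lemma scaled_remainder_cvg i k : scaled_remainder t i k @[t --> 0^'+] --> 0.
Proof.
have e t : scaled_remainder t i k = (invmx (vander x) *m
    ((t ^+ i)^-1 *: (powC (fun j => t * x j) y a - taylor_mx t)) *m invmx (vander y)^T) i k.
  rewrite -scalemxAr -scalemxAl [RHS]mxE /scaled_remainder /diagf mul_diag_mx mxE.
  by rewrite [X in X * _]mxE.
under eq_cvg do rewrite e.
suff : (invmx (vander x) *m ((t ^+ i)^-1 *: (powC (fun j => t * x j) y a - taylor_mx t))
    *m invmx (vander y)^T) i k @[t --> 0^'+] --> (invmx (vander x) *m 0 *m invmx (vander y)^T) i k.
  by rewrite mulmx0 mul0mx mxE.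
apply: (@mulmx3_cvg R R (0 : R)^'+ _ n _ _
  (fun t => (t ^+ i)^-1 *: (powC (fun j => t * x j) y a - taylor_mx t))) => p q.
rewrite mxE.
have [K [d [d0 Kd]]] := remainder_bound i a (x p * y q).
apply: (cvg0_linear_bound d0) => t t0 td.
rewrite mxE [X in _ * X]mxE [X in _ + X]mxE /taylor_mx taylor_mx_entry.
by rewrite [powC _ _ _ p q]mxE -mulrA; exact: Kd.
Qed.

Lemma det_scaled_kernel_near0 : binom_prod n a != 0 ->
  exists t, [/\ 0 < t, t < 1 & 0 < \det (powC (fun j => t * x j) y a) * binom_prod n a].
Proof.
move=> b0.
pose B := diagf (fun i : 'I_n => binom a i).
have det_factor t : 0 < t -> \det (powC (fun j => t * x j) y a) * binom_prod n a =
    \det (vander x) * \prod_(i < n) t ^+ i * (\det (B + scaled_remainder t) * binom_prod n a)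
    * \det (vander y).
  by move=> t0; rewrite scaled_kernel_factor ?gt_eqF // !det_mulmx det_tr det_diagf; ring.
have cvB : \det (B + scaled_remainder t) * binom_prod n a @[t --> 0^'+] -->
    binom_prod n a * binom_prod n a.
  apply: cvgM; last exact: cvg_cst.
  rewrite /binom_prod -det_diagf; apply: det_cvg => i j.
  under eq_cvg do rewrite mxE.
  suff : B i j + scaled_remainder t i j @[t --> 0^'+] --> B i j + 0 by rewrite addr0.
  by apply: cvgD; [exact: cvg_cst | exact: scaled_remainder_cvg].
have bb : 0 < binom_prod n a * binom_prod n a by rewrite -expr2 exprn_even_gt0.
have : \forall t \near 0^'+, [/\ 0 < t, t < 1 & 0 < \det (B + scaled_remainder t) * binom_prod n a].
  near=> t; split.
  - by near: t; exact: nbhs_right_gt.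
  - by near: t; apply: nbhs_right_lt; exact: ltr01.
  - by near: t; apply: (cvgr_gt _ cvB).
case/filter_ex => t [t0 t1 pos]; exists t; split => //.
rewrite det_factor //; apply: mulr_gt0 (det_vander_gt0 hy); apply: mulr_gt0 pos.
by rewrite mulr_gt0 ?det_vander_gt0 //; apply: prodr_gt0 => i _; apply: exprn_gt0.
Unshelve. all: end_near.
Qed.

End ScaledKernel.

Section KernelSign.
Variable R : realType.

(* K_a(x, y) is nonsingular: a row vector v with v K_a = 0 would give a power sum in the
   nodes x with coefficients v vanishing at all the points y_j. *)
Lemma det_kernel_neq0 n (x y : 'I_n -> R) (a : R) :
  (forall l : nat, (l.+1 < n)%N -> a != l%:R) -> incR x -> incR y ->
  (forall j k, 0 < 1 + x j * y k) -> \det (powC x y a) != 0.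
Proof.
move=> ha hx hy pos; apply/negP => /det0P [v v0 hv].
have [j] : exists j, powsum (fun k => v 0 k) x a (y j) != 0.
  apply: powsum_zero_count => //; first exact: strict_incr_inj (@ltxx _ R) hx.
  - apply: contrapT => /forallNP v0'; move/negP: v0; apply; apply/eqP/rowP => k.
    by rewrite mxE; apply/eqP/negPn/negP/v0'.
  - by move=> j k; rewrite mulrC.
suff -> : powsum (fun k => v 0 k) x a (y j) = (v *m powC x y a) 0 j by rewrite hv mxE eqxx.
by rewrite /powsum !mxE; apply: eq_bigr => k _; rewrite mxE [y j * _]mulrC.
Qed.

(* The sign of det K_a(x, y) is that of binom_prod n a, by deformation along t x. *)
Lemma det_kernel_sign n (x y : 'I_n -> R) (a : R) :
  (forall l : nat, (l.+1 < n)%N -> a != l%:R) -> incR x -> incR y ->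
  (forall j k, 0 < 1 + x j * y k) -> 0 < \det (powC x y a) * binom_prod n a.
Proof.
move=> ha hx hy pos.
pose f t := \det (powC (fun j => t * x j) y a) * binom_prod n a.
have posT t j k : 0 <= t -> t <= 1 -> 0 < 1 + t * (x j * y k).
  move=> t0 t1; apply: (affine_pos_between t0 t1); first by rewrite mul0r addr0.
  by rewrite mul1r.
have f_neq0 t : 0 < t -> t <= 1 -> f t != 0.
  move=> t0 t1; rewrite mulf_neq0 ?binom_prod_neq0 //; apply: det_kernel_neq0 => //.
  - by move=> i j ij; rewrite ltr_pM2l // hx.
  - by move=> j k; rewrite -mulrA; apply: posT => //; exact: ltW.
have [t0 [t00 t01 ft0]] := det_scaled_kernel_near0 hx hy (binom_prod_neq0 ha).
have cont : {within `[t0, 1], continuous f}.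
  apply: continuous_in_subspaceT => t; rewrite inE /= in_itv /= => /andP[t0t t1].
  apply: cvgM; last exact: cvg_cst.
  apply: det_cvg => j k.
  have e s : powC (fun j => s * x j) y a j k = powR (1 + s * (x j * y k)) a.
    by rewrite mxE mulrA.
  under eq_cvg do rewrite e.
  have [D _] := shifted_powR_derive a (posT t j k (le_trans (ltW t00) t0t) t1).
  by rewrite e; exact: differentiable_continuous (proj1 (derivable1_diffP _ _) D).
have [f1|f1] := ltP 0 (f 1).
  by move: f1; rewrite /f (_ : (fun j => 1 * x j) = x) //; apply/funext => j; rewrite mul1r.
have [c] : exists2 c, c \in `[t0, 1]%R & f c = 0.
  by apply: IVT (ltW t01) cont _; rewrite ge_min le_max f1 orbT (ltW ft0).
rewrite in_itv /= => /andP[c1 c2] fc.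
by have := f_neq0 c (lt_le_trans t00 c1) c2; rewrite fc eqxx.
Qed.

End KernelSign.

Section PowerMatrix.
Variable R : realType.

Lemma mxsub_powC p k (x y : 'I_p -> R) (a : R) (f g : 'I_k -> 'I_p) :
  mxsub f g (powC x y a) = powC (fun j => x (f j)) (fun j => y (g j)) a.
Proof. by apply/matrixP => i j; rewrite !mxE. Qed.

Lemma rank_mxsub m n k l (f : 'I_k -> 'I_m) (g : 'I_l -> 'I_n) (A : 'M[R]_(m, n)) :
  (\rank (mxsub f g A) <= \rank A)%N.
Proof.
have -> : mxsub f g A = rowsub f 1%:M *m A *m colsub g 1%:M.
  by rewrite mulmx_colsub mulmx1 mul_rowsub_mx mul1mx; apply/matrixP => i j; rewrite !mxE.
exact: leq_trans (mxrankM_maxl _ _) (mxrankM_maxr _ _).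
Qed.

Variables (p : nat) (x y : 'I_p -> R).
Hypotheses (hx : incR x) (hy : incR y) (hpos : forall j k, 0 < 1 + x j * y k).

(* Part 1: every minor is a kernel determinant with all binomial coefficients positive. *)
Lemma powC_TP (alpha : R) : p%:R - 2 < alpha -> TP (powC x y alpha).
Proof.
move=> pa k f g k0 hf hg.
have below l : (l.+2 <= k)%N -> l%:R < alpha.
  move=> lk; apply: le_lt_trans pa.
  have : l.+2%:R <= p%:R :> R by rewrite ler_nat (leq_trans lk (incr_idx_le hf)).
  by rewrite -addn2 natrD; lra.
rewrite mxsub_powC -(pmulr_lgt0 _ (binom_prod_gt0 below)).
apply: det_kernel_sign; [|exact: incR_comp | exact: incR_comp | by move=> *; apply: hpos].
by move=> l lk; rewrite gt_eqF ?below.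
Qed.

(* Part 2: the binomial theorem factors C^{o a} through a + 1 columns, and its leading
   (a + 1) x (a + 1) block is nonsingular. *)
Lemma powC_rank (a : nat) : (a.+1 <= p)%N -> \rank (powC x y a%:R) = a.+1.
Proof.
move=> ap; apply/eqP; rewrite eqn_leq; apply/andP; split.
  pose X : 'M[R]_(p, a.+1) := \matrix_(j, i) x j ^+ i.
  pose Y : 'M[R]_(p, a.+1) := \matrix_(j, i) y j ^+ i.
  pose B : 'M[R]_(a.+1) := diag_mx (\row_(i < a.+1) ('C(a, i))%:R).
  have -> : powC x y a%:R = X *m (B *m Y^T).
    rewrite mul_diag_mx; apply/matrixP => j k; rewrite !mxE.
    rewrite powR_mulrn ?(ltW (hpos j k)) // addrC exprD1n.
    by apply: eq_bigr => i _; rewrite !mxE -mulr_natl exprMn; ring.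
  exact: leq_trans (mxrankM_maxl _ _) (rank_leq_col _).
apply: leq_trans (rank_mxsub (widen_ord ap) (widen_ord ap) _).
rewrite mxsub_powC mxrank_unit // unitmxE unitfE.
apply: det_kernel_neq0; [|exact: incR_comp | exact: incR_comp | by move=> *; apply: hpos].
by move=> l la; rewrite eqr_nat; apply/eqP; lia.
Qed.

(* Part 3: the leading block of size floor(alpha) + 3 has a negative determinant. *)
Lemma powC_negative_minor (alpha : R) : 0 < alpha -> alpha < p%:R - 2 ->
  (forall l : nat, alpha != l%:R) ->
  exists (k : nat) (f : 'I_k -> 'I_p),
    [/\ (0 < k)%N, incr_idx f & \det (mxsub f f (powC x y alpha)) < 0].
Proof.
move=> a0 ap nat_neq; set m := Num.truncn alpha.
have /andP[ma am] := truncn_itv (ltW a0).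
have {}ma : m%:R < alpha by rewrite lt_neqAle ma eq_sym nat_neq.
have kp : (m.+3 <= p)%N.
  have : m.+2%:R < p%:R :> R by rewrite -addn2 natrD; lra.
  by rewrite ltr_nat.
exists m.+3, (widen_ord kp); split => //.
rewrite mxsub_powC -(nmulr_lgt0 _ (binom_prod_floor_lt0 ma am)).
apply: det_kernel_sign; [by move=> l _ | exact: incR_comp | exact: incR_comp |].
by move=> j k; exact: hpos.
Qed.

End PowerMatrix.

Theorem mainTheorem8 (R : realType) (p : nat) (x y : 'I_p -> R) :
  (2 <= p)%N -> incR x -> incR y ->
  (forall j k : 'I_p, 0 < 1 + x j * y k) ->
  [/\ (forall alpha : R, (p%:R - 2) < alpha -> TP (powC x y alpha)),
      (forall a : nat, (a <= p - 2)%N -> \rank (powC x y a%:R) = a.+1)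
    & (forall alpha : R, 0 < alpha -> alpha < p%:R - 2 ->
         ~ (exists z : int, alpha = z%:~R) ->
         ~ TN (powC x y alpha) /\
         exists (k : nat) (f : 'I_k -> 'I_p), [/\ (0 < k)%N, incr_idx f &
           \det (mxsub f f (powC x y alpha)) < 0])].
Proof.
move=> p2 hx hy hpos; split.
- by move=> alpha; apply: powC_TP.
- by move=> a ap; apply: powC_rank => //; lia.
- move=> alpha a0 ap nonint.
  have nat_neq (l : nat) : alpha != l%:R.
    by apply/eqP => e; apply: nonint; exists l%:Z; rewrite e pmulrn.
  have [k [f [k0 hf neg]]] := powC_negative_minor hx hy hpos a0 ap nat_neq.
  split; last by exists k, f.
  by move=> TNC; have := TNC _ _ _ k0 hf hf; rewrite leNgt neg.
Qed.
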